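(* Let $S_{r,N}$ be a nontrivial atomic exponential Puiseux semiring with $r>1$. Let $x\in S_{r,N}$ and $k\in\mathbb{N}$ be such that $r^{s_k}$ divides $x$ in $S_{r,N}$. Then for every factorization $z=\sum_{i=0}^{n}c_ir^{s_i}\in\mathsf{Z}(x)$ (with $c_0,\dots,c_n\in\mathbb{N}$), either $r^{s_k}$ divides $\sum_{i=0}^{k}c_ir^{s_i}$ in $S_{r,N}$ or $r^{s_k}$ divides $\sum_{i=k+1}^{n}c_ir^{s_i}$ in $S_{r,N}$.
   Context: $\mathbb{N}=\{0,1,2,\dots\}$. A numerical monoid $N$ is an additive submonoid of $\mathbb{N}$ with finite complement in $\mathbb{N}$; let $s_0<s_1<\cdots$ be its elements. For $r\in\mathbb{Q}_{>0}$ write $r=\mathsf{n}(r)/\mathsf{d}(r)$ in lowest terms. The exponential Puiseux semiring $S_{r,N}$ is the additive submonoid of $\mathbb{Q}_{\ge0}$ generated by $\{r^k:k\in N\}$; nontrivial means $r\notin\mathbb{N}$, and then it is atomic iff $\mathsf{n}(r)>1$, with atoms $r^s$, $s\in N$. In a monoid $M$, $y$ divides $w$ (written $y\mid_M w$) if $w=y+y'$ for some $y'\in M$. $\mathsf{Z}(x)$ denotes the set of factorizations of $x$ into atoms. *)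

From mathcomp Require Import all_boot all_order all_algebra.
Set Implicit Arguments. Unset Strict Implicit. Unset Printing Implicit Defensive.
Import Order.TTheory GRing.Theory Num.Theory.
Local Open Scope ring_scope.

Definition numerical_monoid (N : pred nat) : Prop :=
  [/\ N 0%N,
      (forall a b, N a -> N b -> N (a + b)%N) &
      exists b, forall m, (b <= m)%N -> N m].

Definition enumerates (N : pred nat) (s : nat -> nat) : Prop :=
  (forall i j, (i < j)%N -> (s i < s j)%N) /\ (forall m, N m <-> exists k, s k = m).

Inductive inS (r : rat) (N : pred nat) : rat -> Prop :=
  | inS0 : inS r N 0
  | inS_gen k : N k -> inS r N (r ^+ k)
  | inS_add x y : inS r N x -> inS r N y -> inS r N (x + y).

Definition dvdS (r : rat) (N : pred nat) (y w : rat) : Prop :=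
  exists y', inS r N y' /\ w = y + y'.

From mathcomp Require Import all_boot all_order all_algebra.
From mathcomp Require Import ring zify.
Import Order.TTheory GRing.Theory Num.Theory.
Local Open Scope ring_scope.

(* Write r = p/q in lowest terms and K = s_k.  Given x = r^K + y with y a sum
   of atoms, split both the factorization z of x and y at the exponent K:
   x = L + H and y = Yl + Yh, where L, Yl only involve atoms r^e with e <= K
   and H, Yh only atoms with e > K.  The "defect" A = L - r^K - Yl = Yh - H
   is then simultaneously
   - an element of q^-K Z (read off from the low side), and
   - of the form p^(K+1) w / q^M (read off from the high side).
   Since p and q are coprime, this forces A = (p g) r^K for an integer g.
   If g >= 0 then L = r^K + Yl + (p g) r^K is a multiple of r^K in S_{r,N};
   if g < 0 then H = r^K + Yh + (-p g - 1) r^K is, using p > 1.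
   The file first develops the two arithmetic notions of the defect and their
   closure properties, then the combination lemma, then the monoid side. *)

Section Arithmetic.

Set Implicit Arguments. Unset Strict Implicit.

Variables (r : rat) (K : nat).

Local Notation p := (numq r).
Local Notation q := (denq r).

Lemma denq_intr_neq0 : (q%:~R : rat) != 0.
Proof. by rewrite intr_eq0 denq_neq0. Qed.

Lemma rat_num_den : r = p%:~R / q%:~R.
Proof. by rewrite divq_num_den. Qed.

(* A has denominator dividing q^K: the shape of a combination of powers r^e
   with e <= K. *)
Definition low_denominator (A : rat) : Prop :=
  exists z : int, A * q%:~R ^+ K = z%:~R.

(* Up to a power of q, A is an integral multiple of p^(K+1): the shape of a
   combination of powers r^e with e > K. *)
Definition high_numerator (A : rat) : Prop :=
  exists (M : nat) (w : int), A * q%:~R ^+ M = (p ^+ K.+1 * w)%:~R.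

Lemma low_denominator0 : low_denominator 0.
Proof. by exists 0; rewrite mul0r. Qed.

Lemma low_denominatorD a b :
  low_denominator a -> low_denominator b -> low_denominator (a + b).
Proof. by move=> [z1 h1] [z2 h2]; exists (z1 + z2); rewrite mulrDl h1 h2 rmorphD. Qed.

Lemma low_denominatorN a : low_denominator a -> low_denominator (- a).
Proof. by move=> [z h]; exists (- z); rewrite mulNr h rmorphN. Qed.

Lemma low_denominatorMn a (c : nat) :
  low_denominator a -> low_denominator (c%:R * a).
Proof. by move=> [z h]; exists (c%:Z * z); rewrite -mulrA h rmorphM. Qed.

Lemma low_denominator_pow e : (e <= K)%N -> low_denominator (r ^+ e).
Proof.
move=> leeK; exists (p ^+ e * q ^+ (K - e)).
rewrite -(subnKC leeK) exprD mulrA {1}rat_num_den expr_div_n divfK; last first.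
  by rewrite expf_neq0 // denq_intr_neq0.
by rewrite rmorphM /= !rmorphXn /= addKn.
Qed.

Lemma high_numerator0 : high_numerator 0.
Proof. by exists 0%N, 0; rewrite mul0r mulr0. Qed.

Lemma high_numeratorD a b :
  high_numerator a -> high_numerator b -> high_numerator (a + b).
Proof.
move=> [M1 [w1 h1]] [M2 [w2 h2]].
exists (M1 + M2)%N, (w1 * q ^+ M2 + w2 * q ^+ M1).
rewrite mulrDl {1}exprD mulrA h1 addnC exprD mulrA h2.
by rewrite !rmorphM !rmorphD !rmorphM /= !rmorphXn /=; ring.
Qed.

Lemma high_numeratorN a : high_numerator a -> high_numerator (- a).
Proof. by move=> [M [w h]]; exists M, (- w); rewrite mulNr h mulrN rmorphN. Qed.

Lemma high_numeratorMn a (c : nat) :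
  high_numerator a -> high_numerator (c%:R * a).
Proof.
move=> [M [w h]]; exists M, (c%:Z * w).
by rewrite -mulrA h !rmorphM /= -[c%:R]/((c%:Z)%:~R); ring.
Qed.

Lemma high_numerator_pow e : (K < e)%N -> high_numerator (r ^+ e).
Proof.
move=> ltKe; exists e, (p ^+ (e - K.+1)).
rewrite {1}rat_num_den expr_div_n divfK; last first.
  by rewrite expf_neq0 // denq_intr_neq0.
by rewrite -exprD subnKC // rmorphXn.
Qed.

Lemma low_denominator_sum (I : Type) (l : seq I) (P : pred I) (a e : I -> nat) :
  (forall i, P i -> (e i <= K)%N) ->
  low_denominator (\sum_(i <- l | P i) (a i)%:R * r ^+ e i).
Proof.
move=> leK; apply: (big_ind low_denominator).
- exact: low_denominator0.
- exact: low_denominatorD.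
- by move=> i Pi; apply/low_denominatorMn/low_denominator_pow/leK.
Qed.

Lemma high_numerator_sum (I : Type) (l : seq I) (P : pred I) (a e : I -> nat) :
  (forall i, P i -> (K < e i)%N) ->
  high_numerator (\sum_(i <- l | P i) (a i)%:R * r ^+ e i).
Proof.
move=> gtK; apply: (big_ind high_numerator).
- exact: high_numerator0.
- exact: high_numeratorD.
- by move=> i Pi; apply/high_numeratorMn/high_numerator_pow/gtK.
Qed.

(* The coprimality of p and q: a rational of both shapes is an integral
   multiple of p r^K. *)
Lemma low_high_multiple A :
  low_denominator A -> high_numerator A ->
  exists g : int, A = (p * g)%:~R * r ^+ K.
Proof.
move=> [z hz] [M [w hw]].
have int_eq : z * q ^+ M = p ^+ K.+1 * w * q ^+ K.
  apply: (@intr_inj rat); rewrite [LHS]rmorphM [RHS]rmorphM /= -hz -hw.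
  by rewrite !rmorphXn /=; ring.
have cop : coprimez (p ^+ K.+1) (q ^+ M).
  by apply/coprimezXl/coprimezXr; rewrite coprimezE coprime_num_den.
have pK_dvd_z : (p ^+ K.+1 %| z)%Z.
  by rewrite -(Gauss_dvdzl _ cop) int_eq -mulrA dvdz_mulr.
exists (z %/ p ^+ K.+1)%Z; set g := (z %/ _)%Z.
apply: (mulIf (expf_neq0 K denq_intr_neq0)); rewrite hz -(divzK pK_dvd_z) -/g.
rewrite [in r ^+ K]rat_num_den expr_div_n !rmorphM /= !rmorphXn /= exprS.
by field; exact: expf_neq0 denq_intr_neq0.
Qed.

Lemma defect_multiple L H Yl Yh :
  low_denominator L -> low_denominator Yl ->
  high_numerator H -> high_numerator Yh ->
  L + H = r ^+ K + (Yl + Yh) ->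
  exists g : int, L - r ^+ K - Yl = (p * g)%:~R * r ^+ K.
Proof.
move=> lowL lowYl highH highYh balance; apply: low_high_multiple.
  apply/low_denominatorD/low_denominatorN/lowYl.
  exact/low_denominatorD/low_denominatorN/low_denominator_pow.
have -> : L - r ^+ K - Yl = Yh - H.
  by rewrite -[L](addrK H) balance; ring.
exact/high_numeratorD/high_numeratorN.
Qed.

End Arithmetic.

Section Semiring.

Set Implicit Arguments. Unset Strict Implicit.

Variables (r : rat) (N : pred nat).

Lemma inS_natmul e (c : nat) : N e -> inS r N (c%:R * r ^+ e).
Proof.
move=> Ne; elim: c => [|c IH]; first by rewrite mul0r; exact: inS0.
by rewrite mulrS mulrDl mul1r; apply: inS_add => //; exact: inS_gen.
Qed.

Lemma inS_intmul e (m : int) : N e -> 0 <= m -> inS r N (m%:~R * r ^+ e).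
Proof. by case: m => // c Ne _; exact: inS_natmul. Qed.

Lemma inS_sum (I : Type) (l : seq I) (P : pred I) (a e : I -> nat) :
  (forall i, P i -> N (e i)) -> inS r N (\sum_(i <- l | P i) (a i)%:R * r ^+ e i).
Proof.
move=> Ne; apply: (big_ind (inS r N)); [exact: inS0 | exact: inS_add |].
by move=> i Pi; apply/inS_natmul/Ne.
Qed.

Lemma inS_atom_sum (s : nat -> nat) :
  (forall m, N m <-> exists j, s j = m) ->
  forall y, inS r N y -> exists l : seq nat, y = \sum_(j <- l) 1%:R * r ^+ s j.
Proof.
move=> hNs y; elim=> [|m Nm|a b _ [la ea] _ [lb eb]].
- by exists [::]; rewrite big_nil.
- by have [j <-] := (hNs m).1 Nm; exists [:: j]; rewrite big_seq1 mul1r.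
- by exists (la ++ lb); rewrite big_cat ea eb.
Qed.

Lemma dvdS_of_defect K L H Yl Yh (g : int) :
  N K -> (1 < numq r)%R -> inS r N Yl -> inS r N Yh ->
  L + H = r ^+ K + (Yl + Yh) ->
  L - r ^+ K - Yl = (numq r * g)%:~R * r ^+ K ->
  dvdS r N (r ^+ K) L \/ dvdS r N (r ^+ K) H.
Proof.
move=> NK p_gt1 SYl SYh balance defect; case: (leP 0 g) => g_sign.
  left; exists (Yl + (numq r * g)%:~R * r ^+ K); split.
    by apply/inS_add/inS_intmul => //; nia.
  by rewrite -defect; ring.
right; exists (Yh + (numq r * - g - 1)%:~R * r ^+ K); split.
  by apply/inS_add/inS_intmul => //; nia.
have -> : H = r ^+ K + (Yl + Yh) - L by rewrite -balance; ring.
have -> : L = r ^+ K + Yl + (numq r * g)%:~R * r ^+ K.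
  by rewrite -defect; ring.
by rewrite !rmorphB !rmorphM rmorphN /=; ring.
Qed.

End Semiring.

Lemma sum_split_le (I : Type) (l : seq I) (f : I -> nat) (k : nat) (F : I -> rat) :
  \sum_(i <- l) F i = \sum_(i <- l | (f i <= k)%N) F i + \sum_(i <- l | (k < f i)%N) F i.
Proof.
rewrite (bigID (fun i => (f i <= k)%N)) /=; congr (_ + _).
by apply: eq_bigl => i; rewrite ltnNge.
Qed.

Theorem mainTheorem13 (N : pred nat) (s : nat -> nat) (r : rat)
  (hN : numerical_monoid N) (hs : enumerates N s)
  (hr1 : 1 < r) (hnontriv : denq r != 1) (hatomic : (1 < numq r)%R)
  (x : rat) (k : nat)
  (hx : inS r N x) (hdiv : dvdS r N (r ^+ s k) x)
  (n : nat) (c : nat -> nat)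
  (hz : x = \sum_(i < n.+1) (c i)%:R * r ^+ s i) :
  dvdS r N (r ^+ s k) (\sum_(i < n.+1 | (i <= k)%N) (c i)%:R * r ^+ s i) \/
  dvdS r N (r ^+ s k) (\sum_(i < n.+1 | (k < i)%N) (c i)%:R * r ^+ s i).
Proof.
case: hs => s_incr hNs.
have Ns i : N (s i) by apply/hNs; exists i.
have s_le_sk i : (i <= k)%N -> (s i <= s k)%N.
  by rewrite leq_eqVlt => /orP [/eqP -> // | /s_incr /ltnW].
case: hdiv => y [hy hxy]; have [l hl] := inS_atom_sum hNs hy.
have balance := hxy.
rewrite hz hl (sum_split_le _ (@nat_of_ord _) k) (sum_split_le _ id k) in balance.
have [g defect] := defect_multiple
  (low_denominator_sum r _ (fun i : 'I_n.+1 => c i) (fun i : 'I_n.+1 => s_le_sk i))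
  (low_denominator_sum r _ (fun=> 1%N) s_le_sk)
  (high_numerator_sum r _ (fun i : 'I_n.+1 => c i) (fun i : 'I_n.+1 => @s_incr k i))
  (high_numerator_sum r _ (fun=> 1%N) (@s_incr k)) balance.
have atoms_in_S (P : pred nat) :
    inS r N (\sum_(j <- l | P j) ((fun=> 1%N) j)%:R * r ^+ s j).
  by apply: inS_sum.
exact: dvdS_of_defect (Ns k) hatomic (atoms_in_S (fun j => j <= k)%N)
  (atoms_in_S (fun j => k < j)%N) balance defect.
Qed.
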